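(* Let $n\ge 1$ and for sections $X_1,\dots,X_h$ define \[ \mu_n(X_1,\dots,X_h)=\sum_{(a_1,\dots,a_h)} \mu\big([\pi^{a_1}]_{\mathscr{F}^{\mathrm{univ}}}(X_1),\dots,[\pi^{a_h}]_{\mathscr{F}^{\mathrm{univ}}}(X_h)\big), \] the sum over integer tuples with $0\le a_i\le n-1$ and $\sum_i a_i=(h-1)(n-1)$ (so that $\mu_0$ is the empty sum $0$). Then for sections $X_1,\dots,X_h$ of $\mathscr{F}^{\mathrm{univ}}[\pi^n]$ over an $\mathcal{A}$-algebra $R$ we have \[ [\pi]_{\mathrm{LT}}(\mu_n(X_1,\dots,X_h)) = \mu_{n-1}\big([\pi]_{\mathscr{F}^{\mathrm{univ}}}(X_1),\dots,[\pi]_{\mathscr{F}^{\mathrm{univ}}}(X_h)\big). \] In particular $\mu_n(X_1,\dots,X_h)$ is a section of $\mathrm{LT}[\pi^n]$.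
   Context: $F=k((\pi))$, $k=\mathbf{F}_q$, $\mathcal{O}_F=k[[\pi]]$, $h\ge1$, $\mathcal{A}=\bar k[[\pi]][[u_1,\dots,u_{h-1}]]$. $\mathscr{F}^{\mathrm{univ}}$ over $\mathcal{A}$ has additive law, $[\zeta](X)=\zeta X$ ($\zeta\in k$), $[\pi](X)=\pi X+u_1X^q+\dots+u_{h-1}X^{q^{h-1}}+X^{q^h}$, and $[\pi^a]$ is the $a$-fold iterate. $\mathrm{LT}$ has additive law, $[\zeta](X)=\zeta X$, $[\pi](X)=\pi X+(-1)^{h-1}X^q$. A section of $G[\pi^n]$ over $R$ is an $s\in R$ with $[\pi^n]_G(s)=0$. $\mu(X_1,\dots,X_h)=\det(X_i^{q^j})_{1\le i\le h,0\le j\le h-1}$ is the Moore determinant. *)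

From HB Require Import structures.
From mathcomp Require Import all_boot all_order all_algebra all_field.
Set Implicit Arguments. Unset Strict Implicit. Unset Printing Implicit Defensive.
Import GRing.Theory.
Local Open Scope ring_scope.

Section LubinTate.
Variables (R : comNzRingType) (q h : nat) (pi : R) (u : 'I_h.-1 -> R).

(* [pi]_{F^univ}(X) = pi X + u_1 X^q + ... + u_{h-1} X^{q^{h-1}} + X^{q^h};
   u i stands for u_{i+1}. *)
Definition piF (X : R) : R :=
  pi * X + \sum_(i < h.-1) u i * X ^+ (q ^ i.+1) + X ^+ (q ^ h).

Definition piFn (a : nat) (X : R) : R := iter a piF X.

Definition piLT (X : R) : R := pi * X + (-1) ^+ h.-1 * X ^+ q.

Definition moore (X : 'I_h -> R) : R :=
  \det (\matrix_(i < h, j < h) X i ^+ (q ^ j)).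

Definition mu_n (n : nat) (X : 'I_h -> R) : R :=
  \sum_(a : {ffun 'I_h -> 'I_n} | (\sum_(i < h) (a i : nat))%N == ((h - 1) * (n - 1))%N)
    moore (fun i => piFn (a i) (X i)).

End LubinTate.

From HB Require Import structures.
From mathcomp Require Import all_boot all_order all_algebra all_field.
From mathcomp Require Import zify.
Set Implicit Arguments.
Unset Strict Implicit.
Unset Printing Implicit Defensive.
Import GRing.Theory.
Local Open Scope ring_scope.

(* Since q is a power of the characteristic, [pi]_LT is additive and
   [pi]_LT (det M) = pi det M + (-1)^(h-1) det M^(q), where the Frobenius
   twist M^(q) of the Moore matrix M of Y has the columns of M shifted by one
   and then the column Y_i^(q^h).  Expanding both determinants along the
   first column of M, and noting that the terms u_j Y_k^(q^j) of [pi]_F give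
   determinants with a repeated column, yields
   [pi]_LT (mu Y) = sum_k [pi]_F (Y_k) * cofactor_(k,0) (M).
   Applied to a summand of mu_n this raises the exponent a_k by one.  The
   terms with a_k = n - 1 vanish because X_k is pi^n-torsion; the others
   correspond, via a_i |-> a_i - [i != k], to the tuples indexing
   mu_(n-1) ([pi] X), the entries a_i (i != k) being positive because of the
   constraint on sum_i a_i.  Iterating, [pi]_LT^n (mu_n X) = mu_0 = 0. *)

Lemma sum_cofactor_col_neq (R : comNzRingType) n (A : 'M[R]_n) (j j' : 'I_n) :
  j != j' -> \sum_k A k j' * cofactor A k j = 0.
Proof.
move=> /negbTE jj'; have := congr1 (fun M : 'M[R]_n => M j j') (mul_adj_mx A).
rewrite !mxE jj' mulr0n => adjA0.
by rewrite -{}[RHS]adjA0; apply: eq_bigr => k _; rewrite mxE mulrC.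
Qed.

Lemma cofactor_row'_eq (R : comNzRingType) n (A B : 'M[R]_n) i j :
  row' i A = row' i B -> cofactor A i j = cofactor B i j.
Proof.
move=> /matrixP eqAB; rewrite /cofactor; congr (_ * \det _).
by apply/matrixP => k l; have := eqAB k (lift j l); rewrite !mxE.
Qed.

Section PowerOfCharacteristic.
Variables (R : comNzRingType) (q : nat).
Hypothesis pcharRq : [pchar R].-nat q.

Lemma expr0q : 0 ^+ q = 0 :> R.
Proof. by rewrite expr0n; case/andP: pcharRq => /lt0n_neq0/negbTE ->. Qed.

Definition powq (x : R) := x ^+ q.

Fact powq_is_nmod_morphism : nmod_morphism powq.
Proof. by split=> [|x y]; [exact: expr0q | exact: exprDn_pchar]. Qed.

Fact powq_is_monoid_morphism : monoid_morphism powq.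
Proof. by split=> [|x y]; rewrite /powq ?expr1n ?exprMn. Qed.

#[local] HB.instance Definition _ :=
  GRing.isNmodMorphism.Build R R powq powq_is_nmod_morphism.
#[local] HB.instance Definition _ :=
  GRing.isMonoidMorphism.Build R R powq powq_is_monoid_morphism.

Lemma det_map_exprq n (A : 'M[R]_n) : \det (map_mx (fun x => x ^+ q) A) = \det A ^+ q.
Proof. exact: (det_map_mx powq). Qed.

End PowerOfCharacteristic.

Section MooreDeterminant.
Variables (R : comNzRingType) (q h' : nat) (pi : R) (u : 'I_h'.+1.-1 -> R).
Hypothesis pcharRq : [pchar R].-nat q.

Definition moore_mx (Y : 'I_h'.+1 -> R) : 'M[R]_h'.+1 := \matrix_(i, j) Y i ^+ (q ^ j).

Lemma piLT0 : piLT q h'.+1 pi 0 = 0.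
Proof. by rewrite /piLT mulr0 expr0q // mulr0 addr0. Qed.

Lemma piLTD x y : piLT q h'.+1 pi (x + y) = piLT q h'.+1 pi x + piLT q h'.+1 pi y.
Proof. by rewrite /piLT exprDn_pchar // !mulrDr addrACA. Qed.

Lemma moore_det Y : moore q Y = \det (moore_mx Y).
Proof. by []. Qed.

Lemma exprq_det_moore Y :
  \det (moore_mx Y) ^+ q
  = (-1) ^+ h' * \sum_k Y k ^+ (q ^ h'.+1) * cofactor (moore_mx Y) k ord0.
Proof.
rewrite -det_map_exprq // (expand_det_col _ ord_max) mulr_sumr.
apply: eq_bigr => k _; rewrite /cofactor.
have -> : col' ord_max (map_mx (fun x => x ^+ q) (moore_mx Y)) = col' ord0 (moore_mx Y).
  by apply/matrixP => i j; rewrite !mxE -exprM -expnSr lift_max.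
rewrite !mxE -exprM -expnSr addn0 exprD /=.
by rewrite [_ * (-1) ^+ h']mulrC -!mulrA mulrCA.
Qed.

Lemma piLT_moore Y :
  piLT q h'.+1 pi (moore q Y) = \sum_k piF q pi u (Y k) * cofactor (moore_mx Y) k ord0.
Proof.
under eq_bigr do rewrite !mulrDl.
rewrite !big_split /=.
have pi_term : \sum_k pi * Y k * cofactor (moore_mx Y) k ord0 = pi * moore q Y.
  rewrite moore_det (expand_det_col _ ord0) mulr_sumr; apply: eq_bigr => k _.
  by rewrite [RHS]mulrA mxE expn0 expr1.
have u_term : \sum_k (\sum_(j < h') u j * Y k ^+ (q ^ j.+1))
                     * cofactor (moore_mx Y) k ord0 = 0.
  under eq_bigr do rewrite mulr_suml.
  rewrite exchange_big big1 // => j _.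
  transitivity (u j * \sum_k moore_mx Y k (lift ord0 j) * cofactor (moore_mx Y) k ord0).
    by rewrite mulr_sumr; apply: eq_bigr => k _; rewrite mxE lift0 mulrA.
  by rewrite sum_cofactor_col_neq ?neq_lift // mulr0.
rewrite pi_term u_term addr0 /piLT exprq_det_moore mulrA -exprD addnn -muln2.
by rewrite exprM sqrr_sign mul1r.
Qed.

End MooreDeterminant.

Lemma sum_indicator n (k : 'I_n) c : (\sum_i (i == k) * c = c)%N.
Proof. by rewrite (bigD1 k) //= eqxx mul1n big1 ?addn0 // => i /negbTE ->. Qed.

Lemma sum_indicatorC n (k : 'I_n) : (\sum_i (i != k : nat) = n.-1)%N.
Proof.
rewrite (bigD1 k) //= eqxx add0n (eq_bigr (fun _ => 1%N)) => [|i ->] //.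
by rewrite sum1_card cardC1 card_ord.
Qed.

Lemma bounded_sum_gt0 n m (a : 'I_n.+1 -> nat) (k l : 'I_n.+1) :
  (forall i, a i <= m)%N -> (a k < m)%N -> (\sum_i a i = n * m)%N -> l != k ->
  (0 < a l)%N.
Proof.
move=> a_le ak_lt suma lk; rewrite lt0n; apply/negP => /eqP al0.
have : (\sum_i (a i + (i == k) * 1 + (i == l) * m) <= \sum_(i < n.+1) m)%N.
  apply: leq_sum => i _; case: (eqVneq i k) => [->|ik].
    by rewrite eq_sym (negbTE lk) muln1 addn0 addn1.
  case: (eqVneq i l) => [->|il]; first by rewrite al0 mul1n.
  by rewrite !addn0.
rewrite !big_split /= !sum_indicator suma sum_nat_const card_ord.
lia.
Qed.

Lemma sum_shifted_tuples (V : nmodType) h' m (k : 'I_h'.+1)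
    (F : {ffun 'I_h'.+1 -> nat} -> V) :
  (forall c : {ffun 'I_h'.+1 -> nat}, c k = m.+1 -> F c = 0) ->
  \sum_(a : {ffun 'I_h'.+1 -> 'I_m.+1} | (\sum_i (a i : nat) == h' * m)%N)
     F [ffun i => (a i + (i == k))%N]
  = \sum_(b : {ffun 'I_h'.+1 -> 'I_m} | (\sum_i (b i : nat) == h' * m.-1)%N)
     F [ffun i => (b i).+1].
Proof.
move=> F_top; rewrite (bigID (fun a : {ffun _ -> 'I_m.+1} => a k < m)%N) /=.
rewrite [X in _ + X]big1 ?addr0 => [|a /andP[_]]; last first.
  rewrite -leqNgt => m_le_ak; apply: F_top; rewrite ffunE eqxx addn1.
  by apply/eqP; rewrite eqSS eqn_leq -ltnS ltn_ord.
case: m F_top => [|n] F_top.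
  by rewrite !big1 // => [b | a /andP[_]]; [case: (b ord0) | rewrite ltn0].
pose raise (b : {ffun 'I_h'.+1 -> 'I_n.+1}) : {ffun 'I_h'.+1 -> 'I_n.+2} :=
  [ffun i => inord (b i + (i != k))].
pose lower (a : {ffun 'I_h'.+1 -> 'I_n.+2}) : {ffun 'I_h'.+1 -> 'I_n.+1} :=
  [ffun i => inord (a i - (i != k))].
have raiseE b i : (raise b i : nat) = (b i + (i != k))%N.
  by rewrite /raise ffunE inordK //; have := ltn_ord (b i); case: (i != k) => /=; lia.
have raiseK b : lower (raise b) = b.
  by apply/ffunP => i; apply/val_inj; rewrite /= /lower ffunE raiseE addnK inordK.
have lowerK (a : {ffun 'I_h'.+1 -> 'I_n.+2}) :
    (\sum_i (a i : nat) == h' * n.+1)%N && (a k < n.+1)%N ->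
    raise (lower a) = a.
  case/andP=> /eqP suma ak_lt; apply/ffunP => i; apply/val_inj => /=.
  rewrite raiseE /lower ffunE; have [->|ik] := eqVneq i k.
    by rewrite subn0 addn0 inordK.
  have ai_gt0 : (0 < a i)%N.
    apply: (bounded_sum_gt0 (m := n.+1) (a := fun i => nat_of_ord (a i))) ik => // j.
    by rewrite -ltnS.
  by rewrite /= inordK ?subnK //; have := ltn_ord (a i); lia.
rewrite (reindex_onto raise lower lowerK); apply: eq_big => [b | b _].
  rewrite raiseK eqxx andbT (raiseE b k) eqxx addn0 ltn_ord andbT.
  rewrite (eq_bigr _ (fun i _ => raiseE b i)) big_split /= sum_indicatorC.
  by rewrite mulnS addnC eqn_add2l.
congr F; apply/ffunP => i; rewrite ffunE (raiseE b i) ffunE -addnA.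
by case: (i == k); rewrite ?addn0 ?add0n addn1.
Qed.

Lemma mu_n0 (R : comNzRingType) q (pi : R) h' (u : 'I_h'.+1.-1 -> R) X :
  mu_n q pi u 0 X = 0.
Proof. by apply: big1 => a; case: (a ord0). Qed.

Section MooreSum.
Variables (R : comNzRingType) (q h' : nat) (pi : R) (u : 'I_h'.+1.-1 -> R).
Variable X : 'I_h'.+1 -> R.
Hypothesis pcharRq : [pchar R].-nat q.

Definition moore_term k (c : {ffun 'I_h'.+1 -> nat}) :=
  piFn q pi u (c k) (X k)
  * cofactor (moore_mx q (fun i => piFn q pi u (c i) (X i))) k ord0.

Lemma moore_term_top k m (c : {ffun 'I_h'.+1 -> nat}) :
  piFn q pi u m (X k) = 0 -> c k = m -> moore_term k c = 0.
Proof. by move=> Xk_tors ck; rewrite /moore_term ck Xk_tors mul0r. Qed.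

Lemma piLT_moore_iter (a : 'I_h'.+1 -> nat) :
  piLT q h'.+1 pi (moore q (fun i => piFn q pi u (a i) (X i)))
  = \sum_k moore_term k [ffun i => (a i + (i == k))%N].
Proof.
rewrite (piLT_moore pi u) //; apply: eq_bigr => k _.
rewrite /moore_term ffunE eqxx addn1 /piFn iterS; congr (_ * _).
apply: cofactor_row'_eq; apply/matrixP => i j.
by rewrite !mxE ffunE eq_sym (negbTE (neq_lift k i)) addn0.
Qed.

Lemma moore_iter_succ (b : 'I_h'.+1 -> nat) :
  moore q (fun i => piFn q pi u (b i) (piF q pi u (X i)))
  = \sum_k moore_term k [ffun i => (b i).+1].
Proof.
rewrite moore_det (expand_det_col _ ord0); apply: eq_bigr => k _.
rewrite /moore_term ffunE mxE expn0 expr1 /piFn -iterSr; congr (_ * cofactor _ _ _).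
by apply/matrixP => i j; rewrite !mxE ffunE -iterSr.
Qed.

Lemma piLT_mu_n_succ m :
  (forall i, piFn q pi u m.+1 (X i) = 0) ->
  piLT q h'.+1 pi (mu_n q pi u m.+1 X) = mu_n q pi u m (fun i => piF q pi u (X i)).
Proof.
move=> X_tors; rewrite /mu_n.
rewrite (big_morph _ (piLTD h' pi pcharRq) (piLT0 h' pi pcharRq)).
under eq_bigr do rewrite piLT_moore_iter.
under [RHS]eq_bigr do rewrite moore_iter_succ.
rewrite exchange_big [RHS]exchange_big; apply: eq_bigr => k _ /=.
rewrite !subn1; apply: sum_shifted_tuples => c.
exact: moore_term_top (X_tors k).
Qed.

End MooreSum.

Lemma iter_piLT_mu_n (R : comNzRingType) q h' (pi : R) (u : 'I_h'.+1.-1 -> R) m X :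
  [pchar R].-nat q -> (forall i, piFn q pi u m (X i) = 0) ->
  iter m (piLT q h'.+1 pi) (mu_n q pi u m X) = 0.
Proof.
move=> pcharRq; elim: m X => [|m IH] X X_tors; first exact: mu_n0.
rewrite iterSr piLT_mu_n_succ // IH // => i.
by rewrite /piFn -iterSr; apply: X_tors.
Qed.

Theorem proposition3p7
  (K : closedFieldType) (R : comAlgType K) (p r q h n : nat)
  (pi : R) (u : 'I_h.-1 -> R) (X : 'I_h -> R) :
  prime p -> p \in [pchar K] -> (0 < r)%N -> q = (p ^ r)%N ->
  (1 <= h)%N -> (1 <= n)%N ->
  (forall i, piFn q pi u n (X i) = 0) ->
  piLT q h pi (mu_n q pi u n X) = mu_n q pi u n.-1 (fun i => piF q pi u (X i))
  /\ iter n (piLT q h pi) (mu_n q pi u n X) = 0.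
Proof.
move=> p_prime pcharKp _ ->.
have pcharRq : [pchar R].-nat (p ^ r)%N by rewrite pnatX pnatE // (pchar_lalg R) pcharKp.
case: h u X => [//|h'] u X _; case: n => [//|m] _ X_tors.
by split; [exact: piLT_mu_n_succ | exact: iter_piLT_mu_n].
Qed.
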